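(* Let $G$ be a finite group and $\mathcal{P}$ a prime ideal of $\mathrm{Gh}(\underline{A}_G)$. For each $H\le G$ write $\mathcal{P}(G/H)=\widetilde{A}(H)\cap\prod_{I\le H}n_{I,H}\mathbb{Z}$ with integers $n_{I,H}\ge0$. Then for all $I\le H\le G$, the ideal $(n_{I,H})\subseteq\mathbb{Z}$ is either a prime ideal or all of $\mathbb{Z}$.
   Context: For $H\le G$, $\widetilde{A}(H)$ is the subring of $\prod_{I\le H}\mathbb{Z}$ of tuples $(a_I)_{I\le H}$ with $a_{hIh^{-1}}=a_I$ for $h\in H$; every ideal of $\widetilde{A}(H)$ is of the form $\widetilde{A}(H)\cap\prod_{I\le H}n_I\mathbb{Z}$ with unique $n_I\ge0$. $\mathrm{Gh}(\underline{A}_G)$ is the $G$-Tambara functor with $\mathrm{Gh}(\underline{A}_G)(G/H)=\widetilde{A}(H)$ and, for $H\le K$, $g\in G$, $I^g=g^{-1}Ig$: $\mathrm{res}^K_H(b)_L=b_L$; $\mathrm{tr}^K_H(a)_I=\sum_{kH\in K/H,\ I^k\le H}a_{I^k}$; $\mathrm{nm}^K_H(a)_I=\prod_{IgH\in I\backslash K/H}a_{I^g\cap H}$; $c_{g,H}(a)_J=a_{J^g}$ for $J\le gHg^{-1}$. A Tambara ideal is a collection of ideals $\mathcal{I}(G/H)$ closed under all restrictions, transfers, norms and conjugations; it is prime (Nakaoka) if it is not everything and whenever $a\in T(G/K_1)$, $b\in T(G/K_2)$ satisfy $\big(\mathrm{nm}^L_{g_1H_1g_1^{-1}}c_{g_1,H_1}\mathrm{res}^{K_1}_{H_1}(a)\big)\big(\mathrm{nm}^L_{g_2H_2g_2^{-1}}c_{g_2,H_2}\mathrm{res}^{K_2}_{H_2}(b)\big)\in\mathcal{I}(G/L)$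 for all $L,H_1,H_2\le G$, $g_1,g_2\in G$ with $H_i\le K_i$, $g_iH_ig_i^{-1}\le L$, then $a\in\mathcal{I}(G/K_1)$ or $b\in\mathcal{I}(G/K_2)$. *)

(* G is modelled as the whole finite group gT; subgroups of G
   are the elements of {group gT}. *)
From HB Require Import structures.
From mathcomp Require Import all_boot all_order all_algebra all_fingroup.
Set Implicit Arguments. Unset Strict Implicit. Unset Printing Implicit Defensive.
Import GRing.Theory.
Local Open Scope ring_scope.

Section Gh.
Variable gT : finGroupType.

(* Candidate elements of Gh(A_G)(G/H) = Atilde(H): integer tuples indexed by
   subgroups; see inA for the subring condition. *)
Definition ghel := {group gT} -> int.

(* a is (the canonical representative of) an element of Atilde(H):
   supported on subgroups I <= H, and invariant under H-conjugation. *)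
Definition inA (H : {group gT}) (a : ghel) : Prop :=
  (forall I : {group gT}, ~~ (I \subset H) -> a I = 0) /\
  (forall (h : gT) (I : {group gT}), h \in H -> I \subset H ->
     a (I :^ h)%G = a I).

Definition gh_zero : ghel := fun _ => 0.
Definition gh_add (a b : ghel) : ghel := fun I => a I + b I.
Definition gh_opp (a : ghel) : ghel := fun I => - a I.
Definition gh_mul (a b : ghel) : ghel := fun I => a I * b I.

Definition gh_res (K H : {group gT}) (b : ghel) : ghel :=
  fun L => if L \subset H then b L else 0.

(* tr^K_H (a)_I = sum_{kH in K/H, I^k <= H} a_{I^k}  for I <= K,
   with I^k = k^-1 I k = I :^ k; cosets kH are lcosets H K. *)
Definition gh_tr (K H : {group gT}) (a : ghel) : ghel :=
  fun I => if I \subset K then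
    \sum_(C in lcosets H K)
       (if (I :^ repr C)%g \subset H then a (I :^ repr C)%G else 0)
  else 0.

Definition gh_nm (K H : {group gT}) (a : ghel) : ghel :=
  fun I => if I \subset K then
    \prod_(C in [set ((I :* g) * H)%g | g in K])
       a (I :^ repr C :&: H)%G
  else 0.

Definition gh_conj (g : gT) (H : {group gT}) (a : ghel) : ghel :=
  fun J => if J \subset (H :^ g^-1)%g then a (J :^ g)%G else 0.

Definition is_ideal (H : {group gT}) (P : ghel -> Prop) : Prop :=
  (forall a, P a -> inA H a) /\ P gh_zero /\
  (forall a b, P a -> P b -> P (gh_add a b)) /\
  (forall a, P a -> P (gh_opp a)) /\
  (forall r a, inA H r -> P a -> P (gh_mul r a)).

Definition tambara_ideal (P : {group gT} -> ghel -> Prop) : Prop :=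
  (forall H, is_ideal H (P H)) /\
  (forall (K H : {group gT}) a, H \subset K -> P K a -> P H (gh_res K H a)) /\
  (forall (K H : {group gT}) a, H \subset K -> P H a -> P K (gh_tr K H a)) /\
  (forall (K H : {group gT}) a, H \subset K -> P H a -> P K (gh_nm K H a)) /\
  (forall (g : gT) (H : {group gT}) a, P H a -> P (H :^ g^-1)%G (gh_conj g H a)).

(* Nakaoka prime Tambara ideal *)
Definition prime_tambara_ideal (P : {group gT} -> ghel -> Prop) : Prop :=
  tambara_ideal P /\
  (exists (H : {group gT}) a, inA H a /\ ~ P H a) /\
  (forall (K1 K2 : {group gT}) a b, inA K1 a -> inA K2 b ->
     (forall (L H1 H2 : {group gT}) (g1 g2 : gT),
        H1 \subset K1 -> H2 \subset K2 ->
        (H1 :^ g1^-1)%g \subset L -> (H2 :^ g2^-1)%g \subset L ->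
        P L (gh_mul
              (gh_nm L (H1 :^ g1^-1)%G (gh_conj g1 H1 (gh_res K1 H1 a)))
              (gh_nm L (H2 :^ g2^-1)%G (gh_conj g2 H2 (gh_res K2 H2 b))))) ->
     P K1 a \/ P K2 b).

End Gh.

(* Suppose n := n_{I,H} is composite, n = x y with 1 < x, y < n, and let e be the
   indicator function of the H-conjugacy class of I.  Then n e lies in P(G/H) but
   x e and y e do not.  Restriction and conjugation commute with scalars and a norm
   turns c f into c^N f, N a number of double cosets; hence each product in the
   primality test for x e and y e is x^N1 u1 * y^N2 u2 with u1, u2 {0,1}-valued,
   whereas n^N1 u1 and n^N2 u2, being norms of n e, lie in P.  Divisibility passes
   to the product because (x y)^(min N1 N2) divides x^N1 y^N2, and invariance under
   conjugation passes to it because, u being {0,1}-valued and n > 1, the value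
   n^N u determines N wherever u is nonzero.  So the product lies in P, and
   primality puts x e or y e in P, a contradiction. *)
From HB Require Import structures.
From mathcomp Require Import all_boot all_order all_algebra all_fingroup.
From mathcomp Require Import zify ring.
Import Order.TTheory GRing.Theory Num.Theory.

Set Implicit Arguments. Unset Strict Implicit. Unset Printing Implicit Defensive.
Local Open Scope ring_scope.

Lemma composite_factor (m : nat) :
  (1 < m)%N -> ~~ prime m ->
  exists x y : nat, [/\ (1 < x < m)%N, (1 < y < m)%N & m = (x * y)%N].
Proof.
move=> m_gt1 /primePn[|[x /andP[x_gt1 x_lt_m] /dvdnP[y m_eq]]].
  by rewrite ltnNge m_gt1.
by exists x, y; rewrite x_gt1 x_lt_m; split=> //; nia.
Qed.

Lemma expr_zero_one_transfer (m x u u' : int) (N N' : nat) :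
  1 < m -> u \in [:: 0; 1] -> u' \in [:: 0; 1] ->
  m ^+ N * u = m ^+ N' * u' -> x ^+ N * u = x ^+ N' * u'.
Proof.
move=> m_gt1; have m_gt0 : 0 < m by rewrite (lt_trans ltr01).
have m_neq0 : m != 0 by rewrite gt_eqF.
rewrite !inE => /orP[]/eqP-> /orP[]/eqP->; rewrite ?mulr0 ?mulr1 //.
- by move/esym/eqP; rewrite expf_eq0 (negPf m_neq0) andbF.
- by move/eqP; rewrite expf_eq0 (negPf m_neq0) andbF.
by move/(ieexprIn m_gt0 (negbT (gt_eqF m_gt1)))->.
Qed.

Lemma dvdz_mul_expr (d x y u1 u2 : int) (N1 N2 : nat) :
  (d %| (x * y) ^+ N1 * u1)%Z -> (d %| (x * y) ^+ N2 * u2)%Z ->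
  (d %| x ^+ N1 * u1 * (y ^+ N2 * u2))%Z.
Proof.
move=> d1 d2; case: (leqP N1 N2) => [N12|/ltnW N21].
  have -> : x ^+ N1 * u1 * (y ^+ N2 * u2) = (x * y) ^+ N1 * u1 * (y ^+ (N2 - N1) * u2).
    by rewrite -{1}(subnKC N12) exprD exprMn; ring.
  exact: dvdz_mulr.
have -> : x ^+ N1 * u1 * (y ^+ N2 * u2) = (x * y) ^+ N2 * u2 * (x ^+ (N1 - N2) * u1).
  by rewrite -{1}(subnKC N21) exprD exprMn; ring.
exact: dvdz_mulr.
Qed.

Section GhostRing.
Variable gT : finGroupType.
Implicit Types (H K L I J : {group gT}) (f : ghel gT) (c : int).

Definition gh_scale c f : ghel gT := fun J => c * f J.

Definition zero_one f := forall J, f J \in [:: 0; 1].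

Definition double_coset_count L K J : nat := #|[set (J :* g) * K | g in L]%g|.

Definition class_indicator H I : ghel gT :=
  fun J => if gval J \in (I :^: H)%g then 1 else 0.

Lemma inA_eq H f f' : f =1 f' -> inA H f -> inA H f'.
Proof.
move=> ff' [supp inv]; split=> [J|h J hH JH]; rewrite -!ff'; [exact: supp|exact: inv].
Qed.

Lemma inA_scale H c f : inA H f -> inA H (gh_scale c f).
Proof.
case=> supp inv; split=> [J /supp|h J hH JH]; rewrite /gh_scale.
  by move->; rewrite mulr0.
by rewrite inv.
Qed.

Lemma inA_mul H f f' : inA H f -> inA H f' -> inA H (gh_mul f f').
Proof.
case=> supp inv [_ inv']; split=> [J /supp|h J hH JH]; rewrite /gh_mul.
  by move->; rewrite mul0r.
by rewrite inv // inv'.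
Qed.

Lemma inA_expr_transfer H (m x : int) (N : {group gT} -> nat) f :
  1 < m -> zero_one f ->
  inA H (fun J => m ^+ N J * f J) -> inA H (fun J => x ^+ N J * f J).
Proof.
move=> m_gt1 f01 [supp inv]; have m_neq0 : m != 0 by rewrite gt_eqF ?(lt_trans ltr01).
split=> [J /supp /eqP|h J hH JH].
  by rewrite mulf_eq0 expf_eq0 (negPf m_neq0) andbF /= => /eqP->; rewrite mulr0.
exact: expr_zero_one_transfer m_gt1 (f01 _) (f01 _) (inv h J hH JH).
Qed.

Lemma gh_res_scale K H c f : gh_res K H (gh_scale c f) =1 gh_scale c (gh_res K H f).
Proof. by move=> J; rewrite /gh_res /gh_scale; case: ifP; rewrite ?mulr0. Qed.

Lemma gh_conj_scale g H c f : gh_conj g H (gh_scale c f) =1 gh_scale c (gh_conj g H f).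
Proof. by move=> J; rewrite /gh_conj /gh_scale; case: ifP; rewrite ?mulr0. Qed.

Lemma eq_gh_nm L K f f' : f =1 f' -> gh_nm L K f =1 gh_nm L K f'.
Proof. by move=> ff' J; rewrite /gh_nm; under eq_bigr do rewrite ff'. Qed.

Lemma gh_nm_scale L K c f J :
  gh_nm L K (gh_scale c f) J = c ^+ double_coset_count L K J * gh_nm L K f J.
Proof.
rewrite /gh_nm; case: ifP => _; last by rewrite mulr0.
by rewrite big_split prodr_const.
Qed.

Lemma gh_res_zero_one K H f : zero_one f -> zero_one (gh_res K H f).
Proof. by move=> f01 J; rewrite /gh_res; case: ifP. Qed.

Lemma gh_conj_zero_one g H f : zero_one f -> zero_one (gh_conj g H f).
Proof. by move=> f01 J; rewrite /gh_conj; case: ifP. Qed.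

Lemma gh_nm_zero_one L K f : zero_one f -> zero_one (gh_nm L K f).
Proof.
move=> f01 J; rewrite /gh_nm; case: ifP => // _.
apply: (big_ind (fun v => v \in [:: 0; 1])) => // u v.
by rewrite !inE => /orP[]/eqP-> /orP[]/eqP->; rewrite ?mul0r ?mulr0 ?mulr1 ?eqxx.
Qed.

Definition gh_nm_conj_res L K H g f : ghel gT :=
  gh_nm L (H :^ g^-1)%G (gh_conj g H (gh_res K H f)).

Lemma gh_nm_conj_res_scale L K H g c f J :
  gh_nm_conj_res L K H g (gh_scale c f) J =
  c ^+ double_coset_count L (H :^ g^-1)%G J * gh_nm_conj_res L K H g f J.
Proof.
rewrite /gh_nm_conj_res -gh_nm_scale; apply: eq_gh_nm => J'.
by rewrite -gh_conj_scale /gh_conj gh_res_scale.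
Qed.

Lemma gh_nm_conj_res_zero_one L K H g f :
  zero_one f -> zero_one (gh_nm_conj_res L K H g f).
Proof. by move=> f01; apply/gh_nm_zero_one/gh_conj_zero_one/gh_res_zero_one. Qed.

Lemma class_indicator_conj H I J h :
  h \in H -> class_indicator H I (J :^ h)%G = class_indicator H I J.
Proof.
move=> hH; rewrite /class_indicator /= -!orbitJs.
by rewrite (orbit_transl _ (mem_orbit 'Js J hH)).
Qed.

Lemma class_indicator_inA H I : I \subset H -> inA H (class_indicator H I).
Proof.
move=> IH; split=> [J|h J hH _]; last exact: class_indicator_conj.
rewrite /class_indicator; case: imsetP => // -[h hH ->].
by rewrite -(conjGid hH) conjSg IH.
Qed.

Lemma class_indicator_zero_one H I : zero_one (class_indicator H I).
Proof. by move=> J; rewrite /class_indicator; case: ifP. Qed.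

Lemma class_indicator_id H I : class_indicator H I I = 1.
Proof. by rewrite /class_indicator -orbitJs orbit_refl. Qed.

Lemma gh_nm_conj_res_scale_inA L K H g (m x : int) f :
  1 < m -> zero_one f ->
  inA L (gh_nm_conj_res L K H g (gh_scale m f)) ->
  inA L (gh_nm_conj_res L K H g (gh_scale x f)).
Proof.
move=> m_gt1 f01 /(inA_eq (gh_nm_conj_res_scale _ _ _ _ _ _)).
move/(inA_expr_transfer x m_gt1 (gh_nm_conj_res_zero_one L K H g f01)).
by apply: inA_eq => J; rewrite gh_nm_conj_res_scale.
Qed.

Lemma tambara_ideal_nm_conj_res (P : {group gT} -> ghel gT -> Prop) L K H g f :
  tambara_ideal P -> H \subset K -> (H :^ g^-1)%g \subset L ->
  P K f -> P L (gh_nm_conj_res L K H g f).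
Proof. by move=> [_ [P_res [_ [P_nm P_conj]]]] HK HgL Pf; exact/P_nm/P_conj/P_res. Qed.

End GhostRing.

Section DivisibilityIdeal.
Variable gT : finGroupType.
Variable P : {group gT} -> ghel gT -> Prop.
Variable n : {group gT} -> {group gT} -> nat.
Hypothesis n_conj : forall (H I : {group gT}) (h : gT),
  I \subset H -> h \in H -> n (I :^ h)%G H = n I H.
Hypothesis P_divisibility : forall (H : {group gT}) (a : ghel gT),
  P H a <-> inA H a /\ forall I : {group gT}, I \subset H -> ((n I H)%:Z %| a I)%Z.
Hypothesis P_tambara : tambara_ideal P.

Lemma class_indicator_scale_mem (I H : {group gT}) :
  I \subset H -> P H (gh_scale (n I H) (class_indicator H I)).
Proof.
move=> IH; apply/P_divisibility; split; first exact/inA_scale/class_indicator_inA.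
move=> J JH; rewrite /gh_scale /class_indicator.
case: imsetP => [[h hH J_eq]|_]; last by rewrite mulr0 dvdz0.
have -> : J = (I :^ h)%G by apply: val_inj.
by rewrite n_conj // mulr1.
Qed.

Lemma class_indicator_scale_notin (I H : {group gT}) (c : nat) :
  I \subset H -> (0 < c < n I H)%N -> ~ P H (gh_scale c%:Z (class_indicator H I)).
Proof.
move=> IH /andP[c_gt0 c_lt] /P_divisibility[_ /(_ I IH)].
rewrite /gh_scale class_indicator_id mulr1 dvdzE /= => /(dvdn_leq c_gt0).
by rewrite leqNgt c_lt.
Qed.

Lemma gh_nm_conj_res_mul_mem (m x y : nat) (L H H1 H2 : {group gT}) (g1 g2 : gT)
    (e : ghel gT) :
  (1 < m)%N -> m = (x * y)%N -> zero_one e -> P H (gh_scale m%:Z e) ->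
  H1 \subset H -> H2 \subset H ->
  (H1 :^ g1^-1)%g \subset L -> (H2 :^ g2^-1)%g \subset L ->
  P L (gh_mul (gh_nm_conj_res L H H1 g1 (gh_scale x%:Z e))
              (gh_nm_conj_res L H H2 g2 (gh_scale y%:Z e))).
Proof.
move=> m_gt1 m_eq e01 Pe H1H H2H H1L H2L.
have m_gt1Z : 1 < m%:Z by rewrite ltz_nat.
have /P_divisibility[inA1 dvd1] := tambara_ideal_nm_conj_res P_tambara H1H H1L Pe.
have /P_divisibility[inA2 dvd2] := tambara_ideal_nm_conj_res P_tambara H2H H2L Pe.
apply/P_divisibility; split.
  exact: inA_mul (gh_nm_conj_res_scale_inA _ m_gt1Z e01 inA1)
                 (gh_nm_conj_res_scale_inA _ m_gt1Z e01 inA2).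
move=> J JL; move: (dvd1 J JL) (dvd2 J JL).
rewrite /gh_mul !gh_nm_conj_res_scale m_eq PoszM.
exact: dvdz_mul_expr.
Qed.

End DivisibilityIdeal.

Theorem lemma4p4 (gT : finGroupType) (P : {group gT} -> ghel gT -> Prop)
  (n : {group gT} -> {group gT} -> nat) :
  prime_tambara_ideal P ->
  (forall (H I : {group gT}) (h : gT), I \subset H -> h \in H ->
     n (I :^ h)%G H = n I H) ->
  (forall (H : {group gT}) (a : ghel gT),
     P H a <-> (inA H a /\
                forall I : {group gT}, I \subset H -> ((n I H)%:Z %| a I)%Z)) ->
  forall I H : {group gT}, I \subset H ->
    n I H = 0%N \/ n I H = 1%N \/ prime (n I H).
Proof.
move=> [P_tambara [_ P_prime]] n_conj P_div I H IH.
set m := n I H.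
have [->|m_neq0] := eqVneq m 0%N; first by left.
have [->|m_neq1] := eqVneq m 1%N; first by right; left.
have [|m_composite] := boolP (prime m); first by right; right.
exfalso.
have m_gt1 : (1 < m)%N by lia.
have [x [y [/andP[x_gt1 x_lt] /andP[y_gt1 y_lt] m_eq]]] :=
  composite_factor m_gt1 m_composite.
have inA_e c : inA H (gh_scale c (class_indicator H I)).
  exact/inA_scale/class_indicator_inA.
have [||] := P_prime H H _ _ (inA_e x%:Z) (inA_e y%:Z).
- move=> L H1 H2 g1 g2.
  exact: (gh_nm_conj_res_mul_mem P_div P_tambara m_gt1 m_eq
           (class_indicator_zero_one H I) (class_indicator_scale_mem n_conj P_div IH)).
- by apply: (class_indicator_scale_notin P_div IH); lia.
- by apply: (class_indicator_scale_notin P_div IH); lia.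
Qed.
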